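(* Let $\mathbf{\Sigma}$ be a cluster pattern of rank $n$ with free coefficients at $t_0$. Then the seed $\Sigma_t$ is coprime for every $t\in\mathbb{T}_n$.
   Context: A semifield is a multiplicative abelian group with a commutative, associative addition $\oplus$ satisfying $(a\oplus b)c=ac\oplus bc$. For formal variables $\mathbf{y}=(y_1,\dots,y_n)$, the universal semifield $\mathbb{Q}_{\mathrm{sf}}(\mathbf{y})$ consists of rational functions expressible as ratios of nonzero polynomials with nonnegative integer coefficients. A seed with coefficients in a semifield $\mathbb{P}$ is $(\mathbf{x},\mathbf{y},B)$ with $\mathbf{x}$ a generating transcendence basis of an ambient field $\mathcal{F}\cong\mathbb{Q}\mathbb{P}(u_1,\dots,u_n)$ over the fraction field $\mathbb{Q}\mathbb{P}$ of the group ring $\mathbb{Z}\mathbb{P}$, $\mathbf{y}\in\mathbb{P}^n$, $B$ an $n\times n$ skew-symmetrizable integer matrix. With $[a]_+=\max(a,0)$ and $\hat y_i=y_i\prod_jx_j^{b_{ji}}$, the mutation $\mu_k$ is: $x'_k=x_k^{-1}\big(\prod_{j}x_j^{[-b_{jk}]_+}\big)\frac{1+\hat y_k}{1\oplus y_k}$, $x'_i=x_i$ ($i\ne k$); $y'_k=y_k^{-1}$, $y'_i=y_iy_k^{[b_{ki}]_+}(1\oplus y_k)^{-b_{ki}}$ ($i\neq k$); $b'_{ij}=-b_{ij}$ if $i=k$ or $j=k$, and $b'_{ij}=b_{ij}+b_{ik}[b_{kj}]_++[-b_{ik}]_+b_{kj}$ otherwise. $\mathbb{T}_n$ is the $n$-regular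 tree with edges labeled $1,\dots,n$, distinct at each vertex. A cluster pattern is $\{\Sigma_t=(\mathbf{x}_t,\mathbf{y}_t,B_t)\}_{t\in\mathbb{T}_n}$ with $\Sigma_{t'}=\mu_k(\Sigma_t)$ whenever $t,t'$ are joined by an edge labeled $k$. It has free coefficients at $t_0$ if its coefficient semifield is $\mathbb{Q}_{\mathrm{sf}}(\mathbf{y})$ and $\mathbf{y}_{t_0}=\mathbf{y}$. For a seed $\Sigma_t$ and $k=1,\dots,n$, let $P_{k;t}=\frac{1}{1\oplus y_{k;t}}\big(y_{k;t}\prod_jx_{j;t}^{[b_{jk;t}]_+}+\prod_jx_{j;t}^{[-b_{jk;t}]_+}\big)\in\mathbb{Z}\mathbb{P}[\mathbf{x}_t]$. The seed $\Sigma_t$ is coprime if $P_{1;t},\dots,P_{n;t}$ are pairwise coprime in $\mathbb{Z}\mathbb{P}[\mathbf{x}_t]$, i.e. any common factor of $P_{i;t}$ and $P_{j;t}$ ($i\ne j$) lies in $\mathbb{Z}\mathbb{P}^{\times}=\{\pm1\}\mathbb{P}$. *)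

From HB Require Import structures.
From mathcomp Require Import all_boot all_order all_algebra fraction.
From mathcomp Require Import finmap.
From mathcomp Require Import monalg.
From mathcomp Require Import mpoly.
From Stdlib Require Import ClassicalEpsilon.
Notation "x %:F" := (@FracField.tofrac _ x).
Set Implicit Arguments. Unset Strict Implicit. Unset Printing Implicit Defensive.
Import GRing.Theory Num.Theory.
Local Open Scope ring_scope.

Section GroupRing.
Local Open Scope fset_scope.
Variable (K : choiceType) (one : K) (mul : K -> K -> K).
Hypotheses (mulA : associative mul) (mul1 : left_id one mul) (mulC : commutative mul).
Lemma mulr1' : right_id one mul. Proof. by move=> x; rewrite mulC mul1. Qed.

Definition grp_ring (_ : associative mul) (_ : left_id one mul)
  (_ : commutative mul) := monalg.malg K int.
Local Notation GR := (grp_ring mulA mul1 mulC).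
HB.instance Definition _ := GRing.Zmodule.copy GR (monalg.malg K int).

Local Notation "<< z *g k >>" := (monalg.mkmalgU k z).
Local Notation "g @@_ k" := (monalg.mcoeff k g) (at level 3, k at level 2).
Implicit Types (g : GR).

Definition gone : GR := << 1 *g one >>.
Definition gmul g1 g2 : GR :=
  \sum_(k1 <- monalg.msupp g1) \sum_(k2 <- monalg.msupp g2)
     << g1@@_k1 * g2@@_k2 *g mul k1 k2 >>.

Lemma gmullw (d1 d2 : {fset K}) g1 g2 :
  monalg.msupp g1 `<=` d1 -> monalg.msupp g2 `<=` d2 ->
  gmul g1 g2 = \sum_(k1 <- d1) \sum_(k2 <- d2) << g1@@_k1 * g2@@_k2 *g mul k1 k2 >>.
Proof.
move=> le_d1 le_d2; rewrite /gmul (big_fset_incl _ le_d1) /=.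
  apply/eq_bigr=> k1 _; apply/big_fset_incl => // k _ /monalg.mcoeff_outdom ->.
  by rewrite mulr0 monalg.monalgU0.
move=> k _ /monalg.mcoeff_outdom g1k.
by rewrite big1 => // k' _; rewrite g1k mul0r monalg.monalgU0.
Qed.

Lemma gmulrw (d1 d2 : {fset K}) g1 g2 :
  monalg.msupp g1 `<=` d1 -> monalg.msupp g2 `<=` d2 ->
  gmul g1 g2 = \sum_(k2 <- d2) \sum_(k1 <- d1) << g1@@_k1 * g2@@_k2 *g mul k1 k2 >>.
Proof. by move=> le_d1 le_d2; rewrite (gmullw le_d1 le_d2) exchange_big. Qed.

Lemma gmul0g : left_zero 0 gmul.
Proof. by move=> g; rewrite /gmul monalg.msupp0 big_seq_fset0. Qed.
Lemma gmulg0 : right_zero 0 gmul.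
Proof. by move=> g; rewrite /gmul exchange_big monalg.msupp0 big_seq_fset0. Qed.

Lemma gmulUg c k g :
  gmul << c *g k >> g = \sum_(k' <- monalg.msupp g) << c * g@@_k' *g mul k k' >>.
Proof.
rewrite (gmullw monalg.msuppU_le (fsubset_refl _)) big_seq_fset1.
by apply/eq_bigr => k' _; rewrite monalg.mcoeffUU.
Qed.

Lemma gmulgU c k g :
  gmul g << c *g k >> = \sum_(k' <- monalg.msupp g) << g@@_k' * c *g mul k' k >>.
Proof.
rewrite (gmulrw (fsubset_refl _) monalg.msuppU_le) big_seq_fset1.
by apply/eq_bigr=> k' _; rewrite monalg.mcoeffUU.
Qed.

Lemma gmulUU c1 c2 k1 k2 :
  gmul << c1 *g k1 >> << c2 *g k2 >> = << c1 * c2 *g mul k1 k2 >>.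
Proof. by rewrite (gmulrw monalg.msuppU_le monalg.msuppU_le) !big_seq_fset1 !monalg.mcoeffUU. Qed.

Lemma gmulEl1 g1 g2 :
  gmul g1 g2 = \sum_(k1 <- monalg.msupp g1) gmul << g1@@_k1 *g k1 >> g2.
Proof. by apply/eq_bigr=> k _; rewrite gmulUg. Qed.

Lemma gmulEr1 g1 g2 :
  gmul g1 g2 = \sum_(k2 <- monalg.msupp g2) gmul g1 << g2@@_k2 *g k2 >>.
Proof.
rewrite [LHS]/gmul exchange_big; apply/eq_bigr=> k _; rewrite gmulgU.
by apply/eq_bigr=> k' _.
Qed.

Lemma gmul1g : left_id gone gmul.
Proof.
move=> g; rewrite gmulUg [RHS]monalg.monalgE.
by apply/eq_bigr=> kg _; rewrite mul1r mul1.
Qed.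

Lemma gmulg1 : right_id gone gmul.
Proof.
move=> g; rewrite gmulgU [RHS]monalg.monalgE.
by apply/eq_bigr=> k _; rewrite mulr1 mulr1'.
Qed.

Lemma gmulgDl : left_distributive gmul +%R.
Proof.
move=> g1 g2 g; rewrite [in RHS](gmullw (fsubsetUl _ (monalg.msupp g2)) (fsubset_refl _)).
rewrite [in RHS](gmullw (fsubsetUr (monalg.msupp g1) _) (fsubset_refl _)).
rewrite (gmullw (monalg.msuppD_le _ _) (fsubset_refl _)).
rewrite -big_split /=; apply/eq_bigr=> k1 _.
rewrite -big_split /=; apply/eq_bigr=> k2 _.
by rewrite monalg.mcoeffD mulrDl monalg.monalgUD.
Qed.

Lemma gmulgDr : right_distributive gmul +%R.
Proof.
move=> g g1 g2; rewrite [in RHS](gmulrw (fsubset_refl _) (fsubsetUl _ (monalg.msupp g2))).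
rewrite [in RHS](gmulrw (fsubset_refl _) (fsubsetUr (monalg.msupp g1) _)).
rewrite (gmulrw (fsubset_refl _) (monalg.msuppD_le _ _)).
rewrite -big_split /=; apply/eq_bigr => k1 _.
rewrite -big_split /=; apply/eq_bigr => k2 _.
by rewrite monalg.mcoeffD mulrDr monalg.monalgUD.
Qed.

Lemma gmulA : associative gmul.
Proof.
move=> g1 g2 g3.
rewrite [RHS](big_morph (gmul^~ _) (fun _ _ => gmulgDl _ _ _) (gmul0g _)).
rewrite gmulEl1; apply/eq_bigr=> k1 _.
rewrite [LHS](big_morph (gmul _) (fun _ _ => gmulgDr _ _ _) (gmulg0 _)).
rewrite [RHS](big_morph (gmul^~ _) (fun _ _ => gmulgDl _ _ _) (gmul0g _)).
apply/eq_bigr=> k2 _.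
rewrite [LHS](big_morph (gmul _) (fun _ _ => gmulgDr _ _ _) (gmulg0 _)).
by rewrite gmulEr1; apply/eq_bigr=> k3 _; rewrite !gmulUU mulrA mulA.
Qed.

Lemma goner_eq0 : gone != 0.
Proof.
apply/eqP => /(congr1 (monalg.mcoeff one)).
by rewrite monalg.mcoeffUU monalg.mcoeff0 => /eqP; rewrite oner_eq0.
Qed.

HB.instance Definition _ := GRing.Zmodule_isRing.Build GR
  gmulA gmul1g gmulg1 gmulgDl gmulgDr goner_eq0.

Lemma gmulC : commutative gmul.
Proof.
move=> g1 g2; rewrite /gmul exchange_big; apply/eq_bigr=> k1 _; apply/eq_bigr=> k2 _.
by rewrite mulrC mulC.
Qed.

HB.instance Definition _ := GRing.Ring_hasCommutativeMul.Build GR gmulC.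

End GroupRing.

Definition Qy (n : nat) := {fraction (mpoly.mpoly n rat)}.

Definition natcoef (n : nat) (p : mpoly.mpoly n rat) : Prop :=
  forall m : 'X_{1..n}, mpoly.mcoeff m p \is a Num.nat.

Lemma natcoef1 (n : nat) : natcoef (1 : mpoly.mpoly n rat).
Proof. by move=> m; rewrite mpoly.mcoeff1 natr_nat. Qed.

Lemma natcoefM (n : nat) (p q : mpoly.mpoly n rat) :
  natcoef p -> natcoef q -> natcoef (p * q).
Proof.
move=> hp hq m; rewrite mpoly.mcoeffM rpred_sum // => k _.
exact: rpredM.
Qed.

Definition subtraction_free (n : nat) (f : Qy n) : Prop :=
  exists p q : mpoly.mpoly n rat,
    [/\ natcoef p, natcoef q,
        p != 0, q != 0 & f = (p%:F) / (q%:F)].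

Definition is_sf (n : nat) (f : Qy n) : bool :=
  if excluded_middle_informative (subtraction_free f) then true else false.

Lemma is_sfP (n : nat) (f : Qy n) : reflect (subtraction_free f) (is_sf f).
Proof.
rewrite /is_sf; case: excluded_middle_informative => h; [left|right]; exact: h.
Qed.

Definition Qsf (n : nat) := {f : Qy n | is_sf f}.

Lemma sf1 (n : nat) : is_sf (1 : Qy n).
Proof.
apply/is_sfP; exists 1, 1; split; rewrite ?oner_eq0 //; try exact: natcoef1.
by rewrite rmorph1 divr1.
Qed.

Lemma sfM (n : nat) (f g : Qy n) : is_sf f -> is_sf g -> is_sf (f * g).
Proof.
move=> /is_sfP [p1 [q1 [Hp1 Hq1 p10 q10 ->]]] /is_sfP [p2 [q2 [Hp2 Hq2 p20 q20 ->]]].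
apply/is_sfP; exists (p1 * p2), (q1 * q2); split; rewrite ?mulf_neq0 //;
  try exact: natcoefM.
by rewrite !rmorphM invfM mulrACA.
Qed.

Definition sf_one (n : nat) : Qsf n := exist _ 1 (sf1 n).
Definition sf_mul (n : nat) (a b : Qsf n) : Qsf n :=
  exist _ (val a * val b) (sfM (valP a) (valP b)).

Lemma sf_mulA (n : nat) : associative (@sf_mul n).
Proof. by move=> a b c; apply: val_inj; rewrite /= mulrA. Qed.
Lemma sf_mul1 (n : nat) : left_id (sf_one n) (@sf_mul n).
Proof. by move=> a; apply: val_inj; rewrite /= mul1r. Qed.
Lemma sf_mulC (n : nat) : commutative (@sf_mul n).
Proof. by move=> a b; apply: val_inj; rewrite /= mulrC. Qed.

(* Elements of Q(y) known to lie in Q_sf(y) are cast into Qsf with [toSf]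
   (all uses below are on genuinely subtraction-free expressions: products,
   quotients, integer powers and sums of elements of Q_sf(y)). *)
Definition toSf (n : nat) (f : Qy n) : Qsf n := insubd (sf_one n) f.

Definition ygen (n : nat) (i : 'I_n) : Qsf n := toSf ((mpoly.mpolyX rat U_(i)%MM)%:F).

Definition ZP (n : nat) : comNzRingType :=
  @grp_ring (Qsf n) (sf_one n) (@sf_mul n) (@sf_mulA n) (@sf_mul1 n) (@sf_mulC n).
Definition ZPx (n : nat) := mpoly.mpoly n (ZP n).

Definition grp (n : nat) (p : Qsf n) : ZP n := monalg.mkmalgU p 1.

Definition posi (a : int) : int := Num.max a 0.
Definition posn (a : int) : nat := if a is Posz m then m else 0%N.

Record yseed (n : nat) := YSeed { yv : 'I_n -> Qsf n ; Bm : 'M[int]_n }.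

Definition skew_symmetrizable (n : nat) (B : 'M[int]_n) : Prop :=
  exists d : 'I_n -> nat, (forall i, (0 < d i)%N) /\
    forall i j, (d i)%:Z * B i j = - ((d j)%:Z * B j i).

(* semifield operations of Q_sf(y): multiplication and + of Q(y) *)
Definition mut_y (n : nat) (k : 'I_n) (y : 'I_n -> Qsf n) (B : 'M[int]_n) :
    'I_n -> Qsf n :=
  fun i => if i == k then toSf ((val (y k))^-1)
           else toSf (val (y i) * (val (y k)) ^ posi (B k i)
                      * (1 + val (y k)) ^ (- B k i)).

Definition mut_B (n : nat) (k : 'I_n) (B : 'M[int]_n) : 'M[int]_n :=
  \matrix_(i, j) if (i == k) || (j == k) then - B i j
                 else B i j + B i k * posi (B k j) + posi (- B i k) * B k j.

Definition mutate (n : nat) (k : 'I_n) (s : yseed n) : yseed n :=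
  YSeed (mut_y k (yv s) (Bm s)) (mut_B k (Bm s)).

(* The n-regular tree T_n: vertices are the reduced words over 'I_n (no two *)
(* consecutive equal letters), t0 = [::]; for every reduced word rcons w k   *)
(* there is an edge labelled k between w and rcons w k, and these are all    *)
(* the edges.                                                               *)

Definition reduced_word (n : nat) (w : seq 'I_n) : bool :=
  sorted (fun a b : 'I_n => a != b) w.

Definition is_pattern (n : nat) (S : seq 'I_n -> yseed n) : Prop :=
  (forall t, reduced_word t -> skew_symmetrizable (Bm (S t))) /\
  (forall (t : seq 'I_n) (k : 'I_n), reduced_word (rcons t k) ->
      S (rcons t k) = mutate k (S t) /\ S t = mutate k (S (rcons t k))).

Definition free_coeffs_at_t0 (n : nat) (S : seq 'I_n -> yseed n) : Prop :=
  forall i, yv (S [::]) i = ygen i.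

Definition mono_pos (n : nat) (B : 'M[int]_n) (k : 'I_n) : 'X_{1..n} :=
  [multinom posn (B j k) | j < n].
Definition mono_neg (n : nat) (B : 'M[int]_n) (k : 'I_n) : 'X_{1..n} :=
  [multinom posn (- B j k) | j < n].

(* P_k = 1/(1 (+) y_k) * (y_k * prod_j x_j^[b_jk]_+ + prod_j x_j^[-b_jk]_+) *)
Definition exch_poly (n : nat) (s : yseed n) (k : 'I_n) : ZPx n :=
  let y := val (yv s k) in
  mpoly.mpolyC n (grp (toSf (y / (1 + y)))) * 'X_[mono_pos (Bm s) k]
  + mpoly.mpolyC n (grp (toSf (1 / (1 + y)))) * 'X_[mono_neg (Bm s) k].

(* units of Z[P]: {+-1} P, viewed as constant polynomials *)
Definition is_ZP_unit_const (n : nat) (d : ZPx n) : Prop :=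
  exists (e : bool) (p : Qsf n), d = mpoly.mpolyC n ((-1) ^+ e * grp p).

Definition coprime_seed (n : nat) (s : yseed n) : Prop :=
  forall i j : 'I_n, i != j -> forall d : ZPx n,
    (exists a, exch_poly s i = d * a) -> (exists b, exch_poly s j = d * b) ->
    is_ZP_unit_const d.

From HB Require Import structures.
From mathcomp Require Import all_boot all_order all_algebra fraction.
From mathcomp Require Import finmap monalg mpoly.
From mathcomp Require Import zify ring.
From Stdlib Require Import ClassicalEpsilon.
Set Implicit Arguments. Unset Strict Implicit. Unset Printing Implicit Defensive.
Import Order.TTheory GRing.Theory Num.Theory.
Local Open Scope ring_scope.

(* Coprimality is tested with weights: group homomorphisms W from the monomials
   p x^m of Z[P][x] to Z.  If d divides a binomial e1 + e2, the product of the
   W-extreme terms of d and of the cofactor survives, so W varies by at most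
   |W e1 - W e2| on the support of d.  Weights separating P come from
   evaluating subtraction-free functions at positive rational points followed
   by l-adic valuations.  With free coefficients at t0 and mutation invertible,
   the y-variables of any seed can be evaluated to any positive rationals, in
   particular y_i = 2 and y_j = 1: the 2-adic weight then varies by 1 on P_i and
   by 0 on P_j.  Correcting an arbitrary weight by a multiple of it forces all
   weights to be constant on the support of a common divisor d, so d is a single
   term; a term dividing both monomials of P_i is a unit, as the two
   x-monomials of P_i have disjoint supports. *)

Definition positive_pt (R : numDomainType) (n : nat) (r : 'I_n -> R) : Prop :=
  forall i, 0 < r i.

Lemma base_digits_inj (D : nat) : (0 < D)%N -> forall n (f g : 'I_n -> nat),
  (forall i, f i < D)%N -> (forall i, g i < D)%N ->
  (\sum_(i < n) f i * D ^ i = \sum_(i < n) g i * D ^ i)%N -> f =1 g.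
Proof.
move=> D0; elim=> [|n ih] f g hf hg; first by move=> _ [].
rewrite !big_ord_recl /= !expn0 !muln1.
under eq_bigr do rewrite /bump /= expnS mulnCA.
under [X in _ = (_ + X)%N]eq_bigr do rewrite /bump /= expnS mulnCA.
rewrite -!big_distrr /= => e.
have e0 : f ord0 = g ord0.
  have := congr1 (modn^~ D) e; rewrite /= -modnDmr -[in RHS]modnDmr !modnMr !addn0.
  by rewrite !modn_small.
move: e; rewrite e0 => /addnI /eqP; rewrite eqn_mul2l gtn_eqF //= => /eqP e.
have ih' := ih _ _ (fun i => hf (lift ord0 i)) (fun i => hg (lift ord0 i)) e.
by move=> i; case: (unliftP ord0 i) => [j ->|->].
Qed.

Lemma poly_nat_nonroot (R : numDomainType) (p : {poly R}) :
  p != 0 -> exists i : nat, ~~ root p i.+1%:R.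
Proof.
move=> p0; suff /allPn[_ /mapP[i _ ->]] :
    ~~ all (root p) [seq i.+1%:R : R | i <- iota 0 (size p)] by exists i.
apply/negP => hall.
suff hu : uniq [seq i.+1%:R : R | i <- iota 0 (size p)].
  by have := max_poly_roots p0 hall hu; rewrite size_map size_iota ltnn.
by rewrite map_inj_uniq ?iota_uniq // => a b /eqP; rewrite eqr_nat eqSS => /eqP.
Qed.

(* Kronecker substitution x_i := t ^+ D ^ i with D > every exponent turns h
   into a nonzero univariate polynomial, which has a positive integer nonroot. *)
Lemma mpoly_positive_nonroot (R : numDomainType) (n : nat) (h : mpoly.mpoly n R) :
  h != 0 -> exists r, positive_pt r /\ h.@[r] != 0.
Proof.
move=> h0; set D := mpoly.msize h.
have D0 : (0 < D)%N by rewrite lt0n mpoly.msize_poly_eq0.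
pose kap (m : 'X_{1..n}) := (\sum_(i < n) m i * D ^ i)%N.
have kap_inj : {in mpoly.msupp h &, injective kap}.
  have lt_D m j : m \in mpoly.msupp h -> (m j < D)%N.
    move=> hm; apply: leq_ltn_trans (mpoly.msize_mdeg_lt hm).
    by rewrite mpoly.mdegE (bigD1 j) //= leq_addr.
  move=> m m' hm hm' e; apply/mnmP.
  exact: (base_digits_inj D0 (lt_D m ^~ hm) (lt_D m' ^~ hm') e).
pose U : {poly R} := \sum_(m <- mpoly.msupp h) h@_m *: 'X^(kap m).
have U0 : U != 0.
  have : mpoly.msupp h != [::] by rewrite mpoly.msupp_eq0.
  case E: (mpoly.msupp h) => [|m0 s] // _.
  have hm0 : m0 \in mpoly.msupp h by rewrite E mem_head.
  apply/eqP => /(congr1 (fun p : {poly R} => p`_(kap m0))).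
  rewrite /U coef_sum (bigD1_seq m0) ?mpoly.msupp_uniq //= big1_seq; last first.
    move=> m /andP[nm hm]; rewrite coefZ coefXn.
    case: eqP => [e|]; last by rewrite mulr0.
    by move: nm; rewrite (kap_inj _ _ hm0 hm e) eqxx.
  rewrite coefZ coefXn eqxx mulr1 addr0 coef0 => /eqP.
  by rewrite mpoly.mcoeff_eq0 hm0.
have kronecker t : h.@[fun i => t ^+ (D ^ i)] = U.[t].
  rewrite mevalE /U horner_sum; apply: eq_bigr => m _.
  rewrite hornerZ hornerXn; congr (_ * _).
  under eq_bigr do rewrite -exprM.
  by rewrite prodrXr /kap; congr (_ ^+ _); apply: eq_bigr => i _; rewrite mulnC.
have [i hi] := poly_nat_nonroot U0.
exists (fun j => i.+1%:R ^+ (D ^ j)); split; first by move=> j; rewrite exprn_gt0.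
by rewrite kronecker.
Qed.

Lemma tofrac_div_eq (R : idomainType) (p q p' q' : R) : q != 0 -> q' != 0 ->
  p%:F / q%:F = p'%:F / q'%:F -> p * q' = p' * q.
Proof.
move=> q0 q'0 /eqP; rewrite eqr_div ?tofrac_eq0 // -!tofracM tofrac_eq.
by move/eqP.
Qed.

Section SubtractionFreeEval.
Variable n : nat.
Implicit Types (p q : mpoly.mpoly n rat) (f g : Qy n) (r : 'I_n -> rat).

Lemma natcoefD p q : natcoef p -> natcoef q -> natcoef (p + q).
Proof. by move=> hp hq m; rewrite mpoly.mcoeffD rpredD. Qed.

Lemma natcoefX (i : 'I_n) : natcoef (mpoly.mpolyX rat U_(i)%MM).
Proof. by move=> m; rewrite mpoly.mcoeffX natr_nat. Qed.

Lemma meval_natcoef_ge0 p r : natcoef p -> positive_pt r -> 0 <= p.@[r].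
Proof.
move=> hp hr; rewrite mevalE sumr_ge0 // => m _.
rewrite mulr_ge0 //; first by apply: natr_ge0; exact: hp.
by rewrite prodr_ge0 // => i _; rewrite exprn_ge0 // ltW.
Qed.

Lemma meval_natcoef_gt0 p r : natcoef p -> p != 0 -> positive_pt r -> 0 < p.@[r].
Proof.
move=> hp p0 hr; rewrite mevalE.
have : mpoly.msupp p != [::] by rewrite mpoly.msupp_eq0.
case E: (mpoly.msupp p) => [|m s] // _.
have hm : m \in mpoly.msupp p by rewrite E mem_head.
rewrite big_cons ltr_wpDr //.
  rewrite sumr_ge0 // => m' _; rewrite mulr_ge0 //; first by apply: natr_ge0; exact: hp.
  by rewrite prodr_ge0 // => i _; rewrite exprn_ge0 // ltW.
rewrite mulr_gt0 //; last by rewrite prodr_gt0 // => i _; rewrite exprn_gt0.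
by rewrite natr_gt0 -?mpoly.mcoeff_msupp ?hp.
Qed.

Lemma natcoefD_neq0 p q : natcoef p -> natcoef q -> p != 0 -> p + q != 0.
Proof.
move=> hp hq p0; have one_pos : positive_pt (fun _ : 'I_n => 1 : rat) by [].
have := ltr_wpDr (meval_natcoef_ge0 hq one_pos) (meval_natcoef_gt0 hp p0 one_pos).
by rewrite -mevalD; apply: contraTneq => ->; rewrite meval0 ltxx.
Qed.

(* Outside Q_sf(y) the value is the junk 0; on Q_sf(y) it does not depend on
   the chosen representation (sf_evalE). *)
Definition sf_eval r f : rat :=
  if excluded_middle_informative (subtraction_free f) is left H then
    let (p, Hq) := constructive_indefinite_description _ H in
    let (q, _) := constructive_indefinite_description _ Hq in
    p.@[r] / q.@[r]
  else 0.

Lemma sf_evalE r f p q : positive_pt r -> natcoef p -> natcoef q ->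
  p != 0 -> q != 0 -> f = p%:F / q%:F -> sf_eval r f = p.@[r] / q.@[r].
Proof.
move=> hr hp hq p0 q0 ef; rewrite /sf_eval.
case: excluded_middle_informative => H; last by case: H; exists p, q.
case: constructive_indefinite_description => p1 Hq1.
case: constructive_indefinite_description => q1 [hp1 hq1 p10 q10 ef1].
have e : p1 * q = p * q1 by apply: tofrac_div_eq => //; rewrite -ef1 -ef.
have q1r := meval_natcoef_gt0 hq1 q10 hr; have qr := meval_natcoef_gt0 hq q0 hr.
by apply/eqP; rewrite eqr_div ?(gt_eqF q1r) ?(gt_eqF qr) // -!mevalM e.
Qed.

Lemma sf_eval_gt0 r f : positive_pt r -> is_sf f -> 0 < sf_eval r f.
Proof.
move=> hr /is_sfP [p [q [hp hq p0 q0 ef]]].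
by rewrite (sf_evalE hr hp hq p0 q0 ef) divr_gt0 // meval_natcoef_gt0.
Qed.

Lemma sf_eval1 r : positive_pt r -> sf_eval r 1 = 1.
Proof.
move=> hr; rewrite (@sf_evalE r _ 1 1) ?oner_neq0 ?tofrac1 ?meval1 ?divr1 //.
all: exact: natcoef1.
Qed.

Lemma sf_evalM r f g : positive_pt r -> is_sf f -> is_sf g ->
  sf_eval r (f * g) = sf_eval r f * sf_eval r g.
Proof.
move=> hr /is_sfP [p [q [hp hq p0 q0 ef]]] /is_sfP [p' [q' [hp' hq' p0' q0' eg]]].
rewrite (sf_evalE hr hp hq p0 q0 ef) (sf_evalE hr hp' hq' p0' q0' eg).
rewrite (@sf_evalE r _ (p * p') (q * q')) ?mulf_neq0 ?mevalM ?mulf_div //.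
- exact: natcoefM.
- exact: natcoefM.
- by rewrite ef eg !tofracM mulf_div.
Qed.

Lemma is_sfV f : is_sf f -> is_sf f^-1.
Proof.
move=> /is_sfP [p [q [hp hq p0 q0 ef]]]; apply/is_sfP.
by exists q, p; split => //; rewrite ef invf_div.
Qed.

Lemma sf_evalV r f : positive_pt r -> is_sf f -> sf_eval r f^-1 = (sf_eval r f)^-1.
Proof.
move=> hr /is_sfP [p [q [hp hq p0 q0 ef]]].
rewrite (sf_evalE hr hp hq p0 q0 ef) (@sf_evalE r _ q p) ?invf_div //.
by rewrite ef invf_div.
Qed.

Lemma is_sf1D f : is_sf f -> is_sf (1 + f).
Proof.
move=> /is_sfP [p [q [hp hq p0 q0 ef]]]; apply/is_sfP.
exists (q + p), q; split; rewrite ?natcoefD_neq0 //; first exact: natcoefD.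
by rewrite ef tofracD mulrDl divff ?tofrac_eq0.
Qed.

Lemma sf_eval1D r f : positive_pt r -> is_sf f -> sf_eval r (1 + f) = 1 + sf_eval r f.
Proof.
move=> hr /is_sfP [p [q [hp hq p0 q0 ef]]].
rewrite (sf_evalE hr hp hq p0 q0 ef) (@sf_evalE r _ (q + p) q) ?natcoefD_neq0 //.
- by rewrite mevalD mulrDl divff // gt_eqF // meval_natcoef_gt0.
- exact: natcoefD.
- by rewrite ef tofracD mulrDl divff ?tofrac_eq0.
Qed.

Lemma is_sfXn f k : is_sf f -> is_sf (f ^+ k).
Proof. by move=> hf; elim: k => [|k ih]; rewrite ?expr0 ?sf1 // exprS sfM. Qed.

Lemma is_sfXz f (z : int) : is_sf f -> is_sf (f ^ z).
Proof.
move=> hf; case: z => k; first by rewrite -exprnP is_sfXn.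
by rewrite NegzE -exprnN is_sfV // is_sfXn.
Qed.

Lemma sf_evalXn r f k : positive_pt r -> is_sf f -> sf_eval r (f ^+ k) = sf_eval r f ^+ k.
Proof.
move=> hr hf; elim: k => [|k ih]; first by rewrite !expr0 sf_eval1.
by rewrite !exprS sf_evalM ?is_sfXn // ih.
Qed.

Lemma sf_evalXz r f (z : int) : positive_pt r -> is_sf f ->
  sf_eval r (f ^ z) = sf_eval r f ^ z.
Proof.
move=> hr hf; case: z => k; first by rewrite -!exprnP sf_evalXn.
by rewrite !NegzE -!exprnN sf_evalV ?is_sfXn // sf_evalXn.
Qed.

Lemma mpolyXU_neq0 (i : 'I_n) : mpoly.mpolyX rat U_(i)%MM != 0.
Proof. by rewrite -mpoly.msize_poly_eq0 mpoly.msizeX. Qed.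

Lemma is_sf_ygen (i : 'I_n) : is_sf (mpoly.mpolyX rat U_(i)%MM)%:F.
Proof.
apply/is_sfP; exists (mpoly.mpolyX rat U_(i)%MM), 1.
split; rewrite ?mpolyXU_neq0 ?oner_neq0 ?tofrac1 ?divr1 //.
- exact: natcoefX.
- exact: natcoef1.
Qed.

Lemma sf_eval_ygen r (i : 'I_n) : positive_pt r ->
  sf_eval r (mpoly.mpolyX rat U_(i)%MM)%:F = r i.
Proof.
move=> hr; rewrite (@sf_evalE r _ (mpoly.mpolyX rat U_(i)%MM) 1)
  ?mpolyXU_neq0 ?oner_neq0 ?meval1 ?divr1 ?mevalXU ?tofrac1 ?divr1 //.
- exact: natcoefX.
- exact: natcoef1.
Qed.

End SubtractionFreeEval.

Lemma posiBposiN (b : int) : posi b - posi (- b) = b.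
Proof. by rewrite /posi; lia. Qed.

Lemma val_toSf (n : nat) (f : Qy n) : is_sf f -> val (toSf f) = f.
Proof. by move=> hf; rewrite /toSf val_insubd hf. Qed.

Section PositiveMutation.
Variable n : nat.
Implicit Types (s : 'I_n -> rat) (B : 'M[int]_n) (k : 'I_n).

Definition mut_pt k s B : 'I_n -> rat :=
  fun i => if i == k then (s k)^-1
           else s i * (s k) ^ posi (B k i) * (1 + s k) ^ (- B k i).

Lemma eq_mut_pt k s s' B : s =1 s' -> mut_pt k s B =1 mut_pt k s' B.
Proof. by move=> e i; rewrite /mut_pt !e. Qed.

Lemma mut_pt_pos k s B : positive_pt s -> positive_pt (mut_pt k s B).
Proof.
move=> hs i; rewrite /mut_pt; case: eqP => _; first by rewrite invr_gt0.
by rewrite !mulr_gt0 ?exprz_gt0 ?addr_gt0.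
Qed.

Lemma mut_ptK k s B B' : positive_pt s -> (forall i, B' k i = - B k i) ->
  mut_pt k (mut_pt k s B') B =1 s.
Proof.
move=> hs hB i; rewrite /mut_pt eqxx.
case: eqP => [->|/eqP ik]; first by rewrite invrK.
rewrite hB opprK; set a := s k; set b := B k i.
have a0 : a != 0 by rewrite gt_eqF ?hs.
have c0 : 1 + a != 0 by rewrite gt_eqF // addr_gt0 ?hs.
have -> : 1 + a^-1 = (1 + a) * a^-1 by rewrite mulrDl mul1r divff // addrC.
rewrite expfzMl !exprz_inv opprK.
have -> : s i * a ^ posi (- b) * (1 + a) ^ b * a ^ (- posi b) * ((1 + a) ^ (- b) * a ^ b)
   = s i * (a ^ posi (- b) * a ^ (- posi b) * a ^ b) * ((1 + a) ^ b * (1 + a) ^ (- b)).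
  by ring.
rewrite -!expfzDr // subrr (_ : posi (- b) - posi b + b = 0) ?expr0z ?mulr1 //.
by rewrite -opprB posiBposiN addNr.
Qed.

Definition peval (r : 'I_n -> rat) (u : Qsf n) : rat := sf_eval r (val u).

Lemma peval_gt0 r u : positive_pt r -> 0 < peval r u.
Proof. by move=> hr; apply: sf_eval_gt0 => //; exact: valP. Qed.

Lemma pevalM r (u v : Qsf n) : positive_pt r ->
  peval r (sf_mul u v) = peval r u * peval r v.
Proof. by move=> hr; rewrite /peval /= sf_evalM //; exact: valP. Qed.

Lemma peval_mut_y r k (y : 'I_n -> Qsf n) B i : positive_pt r ->
  peval r (mut_y k y B i) = mut_pt k (fun j => peval r (y j)) B i.
Proof.
move=> hr; have hi := valP (y i); have hk := valP (y k).
rewrite /peval /mut_y /mut_pt /=; case: eqP => _.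
  by rewrite val_toSf ?is_sfV // sf_evalV.
rewrite val_toSf; last by rewrite !sfM ?is_sfXz ?is_sf1D.
by rewrite !sf_evalM ?sfM ?is_sfXz ?is_sf1D // !sf_evalXz ?is_sf1D // sf_eval1D.
Qed.

Lemma reduced_word_rcons (t : seq 'I_n) k : reduced_word (rcons t k) -> reduced_word t.
Proof. by case: t => // a t; rewrite /reduced_word /= rcons_path => /andP[]. Qed.

(* Mutation commutes with evaluation and is involutive on positive points, so
   a point prescribed at rcons t k is reached by prescribing its mutation at t. *)
Lemma pattern_peval_surj (S : seq 'I_n -> yseed n) : is_pattern S -> free_coeffs_at_t0 S ->
  forall t, reduced_word t -> forall s, positive_pt s ->
  exists2 r, positive_pt r & forall k, peval r (yv (S t) k) = s k.
Proof.
move=> [_ hS] hfree; elim/last_ind => [|t k ih] ht s hs.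
  exists s => // k; rewrite /= hfree /peval /ygen val_toSf ?sf_eval_ygen //.
  exact: is_sf_ygen.
set B' := mut_B k (Bm (S t)).
have [r hr hrt] := ih (reduced_word_rcons ht) _ (mut_pt_pos k B' hs).
exists r => // i; have [-> _] := hS t k ht.
rewrite /= peval_mut_y // (eq_mut_pt _ _ hrt).
by rewrite mut_ptK // => j; rewrite /B' /mut_B mxE eqxx.
Qed.

End PositiveMutation.

(* For prime l this is the l-adic valuation; it vanishes for other l. *)
Definition logq (l : nat) (q : rat) : int :=
  (logn l `|numq q|)%:Z - (logn l `|denq q|)%:Z.

Lemma numq_absz_gt0 (q : rat) : 0 < q -> (0 < `|numq q|)%N.
Proof. by move=> q0; rewrite absz_gt0 gt_eqF // numq_gt0. Qed.

Lemma denq_absz_gt0 (q : rat) : (0 < `|denq q|)%N.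
Proof. by rewrite absz_gt0 denq_neq0. Qed.

Lemma ratE_absz (q : rat) : 0 < q -> q = `|numq q|%:R / `|denq q|%:R.
Proof.
move=> q0; have hn : 0 <= numq q by rewrite ltW // numq_gt0.
by rewrite -{1}(divq_num_den q) !natr_absz !ger0_norm // ltW.
Qed.

Lemma logq_frac l (a b : nat) : (0 < a)%N -> (0 < b)%N ->
  logq l (a%:R / b%:R) = (logn l a)%:Z - (logn l b)%:Z.
Proof.
move=> a0 b0; set q : rat := a%:R / b%:R.
have q0 : 0 < q by rewrite divr_gt0 // ltr0n.
have /eqP : (a%:Z)%:~R / (b%:Z)%:~R = (numq q)%:~R / (denq q)%:~R :> rat.
  by rewrite divq_num_den.
rewrite eqr_div ?intr_eq0 ?denq_neq0 -?lt0n // -!intrM => /eqP /intr_inj e.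
have e' : (a * `|denq q|)%N = (`|numq q| * b)%N.
  by have := congr1 absz e; rewrite !abszM !absz_nat.
have := congr1 (logn l) e'.
rewrite !lognM ?numq_absz_gt0 ?denq_absz_gt0 // /logq; lia.
Qed.

Lemma logqM l (q1 q2 : rat) : 0 < q1 -> 0 < q2 -> logq l (q1 * q2) = logq l q1 + logq l q2.
Proof.
move=> h1 h2; rewrite {1}(ratE_absz h1) {1}(ratE_absz h2) mulf_div -!natrM.
rewrite (@logq_frac l (_ * _) (_ * _)) ?muln_gt0 ?numq_absz_gt0 ?denq_absz_gt0 //.
rewrite !lognM ?numq_absz_gt0 ?denq_absz_gt0 // /logq; lia.
Qed.

Lemma logq1 l : logq l 1 = 0.
Proof. by rewrite /logq /= logn1 subrr. Qed.

Lemma logqV l (q : rat) : 0 < q -> logq l q^-1 = - logq l q.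
Proof.
move=> q0; apply/eqP; rewrite -addr_eq0 addrC -logqM ?invr_gt0 //.
by rewrite mulfV ?lt0r_neq0 // logq1.
Qed.

Lemma logq22 : logq 2 2%:R = 1.
Proof. by rewrite -[2%:R]divr1 (@logq_frac 2 2 1) // logn1 subr0. Qed.

Lemma logq_neq0 (q : rat) : 0 < q -> q != 1 -> exists l, logq l q != 0.
Proof.
move=> q0 q1; set a := `|numq q|%N; set b := `|denq q|%N.
have cab : coprime a b := coprime_num_den q.
have a0 : (0 < a)%N := numq_absz_gt0 q0.
have b0 : (0 < b)%N := denq_absz_gt0 q.
have hab : a != b.
  apply/eqP => e; move: cab; rewrite e /coprime gcdnn => /eqP b1.
  by move: q1; rewrite (ratE_absz q0) -/a -/b e b1 divr1 eqxx.
have [ha|] := ltnP 1 a.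
  exists (pdiv a); rewrite /logq -/a -/b.
  have -> : logn (pdiv a) b = 0%N.
    by apply: logn_coprime; apply: coprime_dvdl (pdiv_dvd a) cab.
  have : (0 < logn (pdiv a) a)%N by rewrite logn_gt0 mem_primes pdiv_prime ?a0 ?pdiv_dvd.
  lia.
move=> a1; have {a1}a1 : a = 1%N by lia.
have hb : (1 < b)%N by move: hab; rewrite a1; lia.
exists (pdiv b); rewrite /logq -/a -/b a1 logn1.
have : (0 < logn (pdiv b) b)%N by rewrite logn_gt0 mem_primes pdiv_prime ?b0 ?pdiv_dvd.
lia.
Qed.

Lemma logq_sep (q1 q2 : rat) : 0 < q1 -> 0 < q2 -> q1 != q2 ->
  exists l, logq l q1 != logq l q2.
Proof.
move=> g1 g2 ne; have q0 : 0 < q1 / q2 by rewrite divr_gt0.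
have [|l hl] := logq_neq0 q0.
  by apply: contra ne => /eqP e; rewrite -[q1](divfK (lt0r_neq0 g2)) e mul1r.
exists l; apply: contra hl => /eqP e.
by rewrite logqM ?invr_gt0 // logqV // e subrr.
Qed.

Lemma peval_sep (n : nat) (u1 u2 : Qsf n) : u1 != u2 ->
  exists2 r, positive_pt r & peval r u1 != peval r u2.
Proof.
move=> ne.
have /is_sfP [p1 [q1 [hp1 hq1 p10 q10 e1]]] := valP u1.
have /is_sfP [p2 [q2 [hp2 hq2 p20 q20 e2]]] := valP u2.
have h0 : p1 * q2 - p2 * q1 != 0.
  rewrite subr_eq0; apply: contra ne => /eqP e; apply/eqP/val_inj.
  rewrite e1 e2; apply/eqP; rewrite eqr_div ?tofrac_eq0 // -!tofracM tofrac_eq.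
  exact/eqP.
have [r [hr hne]] := mpoly_positive_nonroot h0.
exists r => //; rewrite /peval (sf_evalE hr hp1 hq1 p10 q10 e1) (sf_evalE hr hp2 hq2 p20 q20 e2).
have q1r := meval_natcoef_gt0 hq1 q10 hr; have q2r := meval_natcoef_gt0 hq2 q20 hr.
rewrite eqr_div ?lt0r_neq0 //.
by move: hne; rewrite mevalB !mevalM subr_eq0.
Qed.

Section Terms.
Variable n : nat.
Local Notation M := (Qsf n * 'X_{1..n})%type.
Implicit Types (r s : ZPx n) (u v w : M).

Definition tmul u v : M := (sf_mul u.1 v.1, (u.2 + v.2)%MM).
Definition gterm (p : Qsf n) (c : int) : ZP n := monalg.mkmalgU p c.
Definition term (c : int) u : ZPx n := mpoly.mpolyC n (gterm u.1 c) * 'X_[u.2].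
Definition tcoef r u : int := monalg.mcoeff u.1 (mpoly.mcoeff u.2 r : ZP n).
Definition tsupp r : seq M :=
  flatten [seq [seq (p, m) | p <- (monalg.msupp (mpoly.mcoeff m r : ZP n) : seq _)]
          | m <- mpoly.msupp r].

Lemma tcoef_term c u v : tcoef (term c u) v = if u == v then c else 0.
Proof.
rewrite /tcoef /term /gterm mpoly.mcoeffCM mpoly.mcoeffX.
case: u v => [p m] [q m'] /=; rewrite xpair_eqE.
case: eqP => [_|_]; rewrite ?andbF ?mulr0 ?mulr1 ?andbT.
  by rewrite monalg.mcoeffU; case: (p =P q) => //= _; rewrite mulr0n.
by rewrite monalg.mcoeff0.
Qed.

Lemma tcoefD r s u : tcoef (r + s) u = tcoef r u + tcoef s u.
Proof. by rewrite /tcoef mpoly.mcoeffD monalg.mcoeffD. Qed.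

Lemma tcoef0 u : tcoef 0 u = 0.
Proof. by rewrite /tcoef mpoly.mcoeff0 monalg.mcoeff0. Qed.

Lemma tcoef_sum (I : Type) (l : seq I) (F : I -> ZPx n) u :
  tcoef (\sum_(i <- l) F i) u = \sum_(i <- l) tcoef (F i) u.
Proof. by apply: (big_morph (tcoef^~ u)) => [r s|]; [exact: tcoefD|exact: tcoef0]. Qed.

Lemma gtermM p q c d : gterm p c * gterm q d = gterm (sf_mul p q) (c * d).
Proof. exact: gmulUU. Qed.

Lemma termM c d u v : term c u * term d v = term (c * d) (tmul u v).
Proof.
rewrite /term mulrACA -mpoly.mpolyXD; congr (_ * _).
by rewrite -mpoly.mpolyCM gtermM.
Qed.

Lemma mem_tsupp r u : (u \in tsupp r) = (tcoef r u != 0).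
Proof.
case: u => [p m]; rewrite /tcoef /=; apply/flattenP/idP.
  case=> l /mapP [m' hm' ->] /mapP [p' hp' [-> ->]].
  by rewrite monalg.mcoeff_neq0.
move=> h; have hm : m \in mpoly.msupp r.
  by rewrite mpoly.mcoeff_msupp; apply: contra h => /eqP ->; rewrite monalg.mcoeff0.
exists [seq (p0, m) | p0 <- (monalg.msupp (mpoly.mcoeff m r : ZP n) : seq _)].
  by apply/mapP; exists m.
by apply/mapP; exists p => //; rewrite -monalg.mcoeff_neq0.
Qed.

Lemma tsupp_uniq r : uniq (tsupp r).
Proof.
rewrite /tsupp; elim: (mpoly.msupp r) (mpoly.msupp_uniq r) => //= m l ih /andP[ml ul].
rewrite cat_uniq ih // andbT map_inj_uniq ?fset_uniq; last by move=> x y [].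
apply/hasPn => u /flattenP [l' /mapP [m' hm' ->]] /mapP [p hp ->].
by apply/mapP => [[p' _ [_ e]]]; move: hm'; rewrite e (negPf ml).
Qed.

Lemma term_expand r : r = \sum_(u <- tsupp r) term (tcoef r u) u.
Proof.
rewrite {1}(mpoly.mpolyE r) /tsupp [RHS]big_flatten [RHS]big_map.
apply: eq_bigr => m _.
rewrite big_map /term -mpoly.mul_mpolyC /= -mulr_suml; congr (_ * _).
rewrite -raddf_sum /=; congr (mpoly.mpolyC n _).
by rewrite {1}(monalg.monalgE (mpoly.mcoeff m r : ZP n)).
Qed.

Lemma tsupp_eq0 r : (tsupp r == [::]) = (r == 0).
Proof.
apply/eqP/eqP => [e|->]; first by rewrite [r]term_expand e big_nil.
by rewrite /tsupp mpoly.msupp0.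
Qed.

Lemma tcoefM r s w : tcoef (r * s) w =
  \sum_(u <- tsupp r) \sum_(v <- tsupp s)
     (if tmul u v == w then tcoef r u * tcoef s v else 0).
Proof.
rewrite {1}(term_expand r) {1}(term_expand s) mulr_suml tcoef_sum.
apply: eq_bigr => u _; rewrite mulr_sumr tcoef_sum; apply: eq_bigr => v _.
by rewrite termM tcoef_term.
Qed.

Lemma term_mulE c u r : term c u * r = \sum_(v <- tsupp r) term (c * tcoef r v) (tmul u v).
Proof. by rewrite {1}[r]term_expand mulr_sumr; apply: eq_bigr => v _; exact: termM. Qed.

Lemma tsupp_single r : r != 0 -> {in tsupp r &, forall u v, u = v} ->
  exists u, r = term (tcoef r u) u.
Proof.
rewrite -tsupp_eq0 => r0 h; case E: (tsupp r) r0 => [|u l] // _.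
have hu : u \in tsupp r by rewrite E mem_head.
suff el : l = [::] by exists u; rewrite {1}[r]term_expand E el big_seq1.
case: l E => // w l E; have hw : w \in tsupp r by rewrite E !inE eqxx orbT.
by have := tsupp_uniq r; rewrite E /= inE -(h _ _ hu hw) eqxx.
Qed.

Lemma tcoef_binomial u v w : tcoef (term 1 u + term 1 v) w =
  (if u == w then 1 else 0) + (if v == w then 1 else 0).
Proof. by apply: etrans (tcoefD _ _ w) _; congr (_ + _); exact: tcoef_term. Qed.

Lemma tsupp_binomial u v : {subset tsupp (term 1 u + term 1 v) <= [:: u; v]}.
Proof.
move=> w; rewrite mem_tsupp tcoef_binomial !inE.
by case: (eqVneq u w); case: (eqVneq v w); rewrite ?orbT // addr0 eqxx.
Qed.

Lemma binomial_neq0 u v : term 1 u + term 1 v != 0.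
Proof.
apply/eqP => /(congr1 (fun r => tcoef r u)); rewrite tcoef_binomial tcoef0 eqxx.
by case: (eqVneq v u).
Qed.

Lemma tcoef_binomial_l u v : u != v -> tcoef (term 1 u + term 1 v) u = 1.
Proof. by rewrite tcoef_binomial eqxx eq_sym => /negPf ->; rewrite addr0. Qed.

Lemma tcoef_binomial_r u v : u != v -> tcoef (term 1 u + term 1 v) v = 1.
Proof. by rewrite tcoef_binomial eqxx => /negPf ->; rewrite add0r. Qed.

Lemma tcoef_term_mul_eq1 c u r w : tcoef (term c u * r) w = 1 ->
  (c = 1 \/ c = -1) /\ exists v, tmul u v = w.
Proof.
rewrite term_mulE tcoef_sum; under eq_bigr do rewrite tcoef_term.
move=> h; split.
  have : c * \sum_(v <- tsupp r) (if tmul u v == w then tcoef r v else 0) = 1.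
    rewrite -h mulr_sumr; apply: eq_bigr => v _.
    by case: ifP => _; rewrite ?mulr0.
  move: (\sum_(v <- _) _) => X hX.
  have : c \is a intUnitRing.unitz by apply: (@intUnitRing.unitzPl c X); rewrite mulrC.
  by rewrite qualifE => /orP [/eqP ->|/eqP ->]; [left|right].
have [/hasP [v _ /eqP e]|/hasPn hn] := boolP (has (fun v => tmul u v == w) (tsupp r)).
  by exists v.
move: h; rewrite big1_seq; first by move/eqP; rewrite eq_sym oner_eq0.
by move=> v /andP [_ /hn /negPf ->].
Qed.

End Terms.

Lemma seq_argmax (T : eqType) (R : realDomainType) (l : seq T) (F : T -> R) : l != [::] ->
  exists2 x, x \in l & forall y, y \in l -> F y <= F x.
Proof.
elim: l => // a l ih _; have [->|/ih [x xl hx]] := eqVneq l [::].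
  by exists a; rewrite ?mem_head // => y; rewrite inE => /eqP ->.
have [hax|hxa] := lerP (F a) (F x).
  by exists x; rewrite ?inE ?xl ?orbT // => y; rewrite inE => /predU1P [->|/hx].
exists a; first exact: mem_head.
by move=> y; rewrite inE => /predU1P [->|/hx hy] //; exact: le_trans hy (ltW hxa).
Qed.

Lemma mulr_addr_neq0 (N a w : int) : `|w| < N -> a != 0 -> N * a + w != 0.
Proof. by move=> h1 /eqP h2; apply/eqP => h3; nia. Qed.

Lemma ler_mul_add_small (N a c k : int) : 0 < N -> k < N -> N * a <= N * c + k -> a <= c.
Proof. by move=> *; nia. Qed.

Lemma le_norm_sum (T : eqType) (R : numDomainType) (l : seq T) (F : T -> R) x : x \in l ->
  `|F x| <= \sum_(y <- l) `|F y|.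
Proof. by move=> hx; rewrite (big_rem x hx) /= lerDl sumr_ge0. Qed.

Section Weights.
Variable n : nat.
Local Notation M := (Qsf n * 'X_{1..n})%type.
Implicit Types (d e : ZPx n) (u v w x y f : M) (W V : M -> int).

Definition is_weight W := forall u v, W (tmul u v) = W u + W v.

Lemma is_weightN W : is_weight W -> is_weight (fun u => - W u).
Proof. by move=> hW u v; rewrite hW opprD. Qed.

Lemma is_weight_scaleD (a : int) W V : is_weight W -> is_weight V ->
  is_weight (fun u => a * W u + V u).
Proof. by move=> hW hV u v; rewrite hW hV mulrDr addrACA. Qed.

Lemma perturbed_weight_inj (S : seq M) W V (N : int) :
  {in S &, forall a b, a != b -> V a != V b /\ `|V a - V b| < N} ->
  {in S &, injective (fun u => N * W u + V u)}.
Proof.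
move=> hV a b ha hb eW; apply/eqP/negPn/negP => ab.
have [hVab hab] := hV _ _ ha hb ab.
have : N * (W a - W b) + (V a - V b) != 0.
  have [->|nWab] := eqVneq (W a) (W b); first by rewrite subrr mulr0 add0r subr_eq0.
  by apply: mulr_addr_neq0; rewrite ?subr_eq0.
by rewrite mulrBr addrACA -opprD eW subrr eqxx.
Qed.

Definition logq_weight (r : 'I_n -> rat) (l : nat) : M -> int :=
  fun u => logq l (peval r u.1).

Lemma is_weight_logq r l : positive_pt r -> is_weight (logq_weight r l).
Proof. by move=> hr u v; rewrite /logq_weight /= pevalM // logqM ?peval_gt0. Qed.

Definition deg_weight (i : 'I_n) : M -> int := fun u => (u.2 i)%:Z.

Lemma is_weight_deg i : is_weight (deg_weight i).
Proof. by move=> u v; rewrite /deg_weight /= mnmDE PoszD. Qed.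

Lemma weight_sep u v : u != v -> exists2 W, is_weight W & W u != W v.
Proof.
case: u v => [p m] [q m']; rewrite xpair_eqE negb_and => /orP [hpq|hmm].
  have [r hr hne] := peval_sep hpq.
  have [l hl] := logq_sep (peval_gt0 p hr) (peval_gt0 q hr) hne.
  by exists (logq_weight r l); [exact: is_weight_logq|].
have [i hi] : exists i, m i != m' i.
  apply/existsP; apply: contraR hmm => /existsPn h; apply/eqP/mnmP => i.
  by apply/eqP; move: (h i); rewrite negbK.
by exists (deg_weight i); [exact: is_weight_deg|rewrite /deg_weight /= eqz_nat].
Qed.

Lemma separating_weight (ps : seq (M * M)) : (forall pr, pr \in ps -> pr.1 != pr.2) ->
  exists2 V, is_weight V & forall pr, pr \in ps -> V pr.1 != V pr.2.
Proof.
elim: ps => [|[a b] ps ih] hps.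
  by exists (fun _ => 0) => // u v; rewrite addr0.
have [|V hV hVps] := ih; first by move=> pr h; apply: hps; rewrite inE h orbT.
have [eab|neab] := eqVneq (V a) (V b); last first.
  by exists V => // pr; rewrite inE => /predU1P [->|/hVps].
have [W hW hWab] := weight_sep (hps _ (mem_head _ _)).
pose N := 1 + \sum_(pr <- ps) `|W pr.1 - W pr.2|.
exists (fun u => N * V u + W u); first exact: is_weight_scaleD.
move=> pr; rewrite inE => /predU1P [-> /=|hpr].
  by rewrite eab; apply: contra hWab => /eqP /addrI ->.
have hN : `|W pr.1 - W pr.2| < N.
  by rewrite /N ltr_pwDl // (le_norm_sum (fun pr => W pr.1 - W pr.2) hpr).
have := mulr_addr_neq0 hN (_ : V pr.1 - V pr.2 != 0).
rewrite subr_eq0 hVps // mulrBr addrACA -opprD => /(_ isT).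
by rewrite subr_eq0.
Qed.

(* The product of the W-maximal terms of d and e cannot cancel when W is
   injective on the supports. *)
Lemma weight_mul_upper W d e : is_weight W -> d != 0 -> e != 0 ->
  {in tsupp d &, injective W} -> {in tsupp e &, injective W} ->
  forall x y, x \in tsupp d -> y \in tsupp e ->
  exists2 w, w \in tsupp (d * e) & W x + W y <= W w.
Proof.
rewrite -!tsupp_eq0 => hW d0 e0 id ie x y hx hy.
have [ud hud mud] := seq_argmax W d0; have [ue hue mue] := seq_argmax W e0.
exists (tmul ud ue); last by rewrite hW lerD ?mud ?mue.
rewrite mem_tsupp tcoefM (bigD1_seq ud) ?tsupp_uniq //=.
rewrite [X in _ + X]big1_seq ?addr0; last first.
  move=> u /andP [nu hu]; apply: big1_seq => v /andP [_ hv].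
  case: eqP => [/(congr1 W)|//]; rewrite !hW => e'.
  have : W u = W ud.
    apply/eqP; rewrite eq_le mud //= -(lerD2r (W v)) e' lerD2l mue //.
  by move/(id _ _ hu hud) => eu; rewrite eu eqxx in nu.
rewrite (bigD1_seq ue hue (tsupp_uniq e)) /= eqxx [X in _ + X]big1_seq ?addr0.
  by rewrite mulf_neq0 // -mem_tsupp.
move=> v /andP [nv hv]; case: eqP => [/(congr1 W)|//]; rewrite !hW => /addrI.
by move/(ie _ _ hv hue) => ev; rewrite ev eqxx in nv.
Qed.

Lemma weight_width_inj W d e f1 f2 : is_weight W -> d != 0 -> e != 0 ->
  {in tsupp d &, injective W} -> {in tsupp e &, injective W} ->
  {subset tsupp (d * e) <= [:: f1; f2]} ->
  forall x y, x \in tsupp d -> y \in tsupp d -> W x - W y <= `|W f1 - W f2|.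
Proof.
move=> hW d0 e0 id ie hf x y hx hy.
have : tsupp e != [::] by rewrite tsupp_eq0.
case E: (tsupp e) => [//|z l] _.
have hz : z \in tsupp e by rewrite E mem_head.
have [wp /hf hwp hxz] := weight_mul_upper hW d0 e0 id ie hx hz.
have injN (g : ZPx n) : {in tsupp g &, injective W} ->
    {in tsupp g &, injective (fun u => - W u)}.
  by move=> ig a b ha hb /oppr_inj; apply: ig.
have [wm /hf hwm hyz] :=
  weight_mul_upper (is_weightN hW) d0 e0 (injN _ id) (injN _ ie) hy hz.
have : W wp - W wm <= `|W f1 - W f2|.
  move: hwp hwm; rewrite !inE => /predU1P[->|/eqP->] /predU1P[->|/eqP->];
  by rewrite ?subrr ?ler_norm // distrC ler_norm.
by apply: le_trans; move: hxz hyz; lia.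
Qed.

(* Perturbing W by a small separating weight V makes it injective on the
   supports without changing the bound. *)
Lemma weight_width W d e f1 f2 : is_weight W -> d != 0 -> e != 0 ->
  {subset tsupp (d * e) <= [:: f1; f2]} ->
  forall x y, x \in tsupp d -> y \in tsupp d -> W x - W y <= `|W f1 - W f2|.
Proof.
move=> hW d0 e0 hf x y hx hy.
pose S := tsupp d ++ tsupp e.
pose ps := [seq pr <- [seq (a, b) | a <- S, b <- S] | pr.1 != pr.2].
have inps a b : a \in S -> b \in S -> a != b -> (a, b) \in ps.
  by move=> ha hb ab; rewrite mem_filter ab /=; apply/allpairsP; exists (a, b).
have [V hV hVps] : exists2 V, is_weight V & forall pr, pr \in ps -> V pr.1 != V pr.2.
  by apply: separating_weight => pr; rewrite mem_filter => /andP [].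
pose N := 1 + \sum_(pr <- ps) `|V pr.1 - V pr.2| + `|V f1 - V f2|.
have hN a b : a \in S -> b \in S -> a != b -> `|V a - V b| + `|V f1 - V f2| < N.
  move=> ha hb ab; rewrite /N -addrA ltr_pwDl // lerD2r.
  exact: (le_norm_sum (fun pr => V pr.1 - V pr.2) (inps _ _ ha hb ab)).
have N0 : 0 < N by rewrite /N -addrA ltr_pwDl ?addr_ge0 ?sumr_ge0.
pose W' u := N * W u + V u.
have hW' : is_weight W' by exact: is_weight_scaleD.
have inj : {in S &, injective W'}.
  apply: perturbed_weight_inj => a b ha hb ab; split; first exact: hVps (inps _ _ ha hb ab).
  by have := hN _ _ ha hb ab; lia.
have sub_inj (g : ZPx n) : {subset tsupp g <= S} -> {in tsupp g &, injective W'}.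
  by move=> gS a b ha hb; apply: inj; apply: gS.
have Sd : {subset tsupp d <= S} by move=> a h; rewrite mem_cat h.
have Se : {subset tsupp e <= S} by move=> a h; rewrite mem_cat h orbT.
have := weight_width_inj hW' d0 e0 (sub_inj _ Sd) (sub_inj _ Se) hf hx hy.
have [->|xy] := eqVneq x y; first by move=> _; rewrite subrr normr_ge0.
have hNxy : `|V f1 - V f2| + `|V x - V y| < N by rewrite addrC hN ?Sd.
have tri : `|N * W f1 + V f1 - (N * W f2 + V f2)| <= N * `|W f1 - W f2| + `|V f1 - V f2|.
  rewrite (_ : _ - _ = N * (W f1 - W f2) + (V f1 - V f2)); last by ring.
  by rewrite (le_trans (ler_normD _ _)) // normrM gtr0_norm.
have hVxy : - `|V x - V y| <= V x - V y by rewrite lerNl -normrN ler_norm.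
rewrite /W' => hwi; apply: (ler_mul_add_small N0 hNxy).
lia.
Qed.

Lemma dvd_binomial_neq0 d e f1 f2 : d * e = term 1 f1 + term 1 f2 -> d != 0 /\ e != 0.
Proof.
move=> de; have nz := binomial_neq0 f1 f2; rewrite -de in nz.
by split; apply: contraNneq nz => ->; rewrite ?mul0r ?mulr0.
Qed.

Lemma weight_const_dvd_binomial W d e f1 f2 : is_weight W -> W f1 = W f2 ->
  d * e = term 1 f1 + term 1 f2 -> {in tsupp d &, forall x y, W x = W y}.
Proof.
move=> hW Wf de x y hx hy; have [d0 e0] := dvd_binomial_neq0 de.
have hf : {subset tsupp (d * e) <= [:: f1; f2]} by rewrite de; exact: tsupp_binomial.
have := weight_width hW d0 e0 hf hx hy; have := weight_width hW d0 e0 hf hy hx.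
rewrite Wf subrr normr0; lia.
Qed.

(* Any weight W0 becomes constant on the support of d after subtracting the
   multiple of W that kills its spread on the first binomial. *)
Lemma dvd_binomials_single_term W d a b f1 f2 g1 g2 : is_weight W ->
  W f1 - W f2 = 1 -> W g1 = W g2 ->
  d * a = term 1 f1 + term 1 f2 -> d * b = term 1 g1 + term 1 g2 ->
  exists u, d = term (tcoef d u) u.
Proof.
move=> hW Wa Wb da db; have [d0 _] := dvd_binomial_neq0 da.
apply: tsupp_single => // x y hx hy.
have [//|/weight_sep [W0 hW0 /negP[]]] := eqVneq x y; apply/eqP.
set c := W0 f1 - W0 f2.
have hU : is_weight (fun u => - c * W u + W0 u) by exact: is_weight_scaleD.
have Ua : - c * W f1 + W0 f1 = - c * W f2 + W0 f2 by rewrite /c; lia.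
have := weight_const_dvd_binomial hU Ua da hx hy.
by rewrite (weight_const_dvd_binomial hW Wb db hx hy) => /addrI.
Qed.

End Weights.

Section ExchangePolynomials.
Variable n : nat.
Local Notation M := (Qsf n * 'X_{1..n})%type.
Implicit Types (s : yseed n) (k : 'I_n).

Definition exch_pos s k : M :=
  (toSf (val (yv s k) / (1 + val (yv s k))), mono_pos (Bm s) k).
Definition exch_neg s k : M := (toSf (1 / (1 + val (yv s k))), mono_neg (Bm s) k).

Lemma exch_polyE s k : exch_poly s k = term 1 (exch_pos s k) + term 1 (exch_neg s k).
Proof. by []. Qed.

Lemma exch_pos_neg s k : (exch_pos s k).1 = sf_mul (exch_neg s k).1 (yv s k).
Proof.
have hy := valP (yv s k); apply: val_inj => /=.
rewrite !val_toSf ?sfM ?sf1 ?is_sfV ?is_sf1D //.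
by rewrite mul1r mulrC.
Qed.

Lemma logq_weight_exch r l s k : positive_pt r ->
  logq_weight r l (exch_pos s k) - logq_weight r l (exch_neg s k) =
  logq l (peval r (yv s k)).
Proof.
move=> hr; rewrite /logq_weight exch_pos_neg pevalM // logqM ?peval_gt0 //.
by rewrite addrC addKr.
Qed.

Lemma mono_pos_neg_disjoint (B : 'M[int]_n) k (m m1 m2 : 'X_{1..n}) :
  (m + m1 = mono_pos B k)%MM -> (m + m2 = mono_neg B k)%MM -> m = 0%MM.
Proof.
move=> e1 e2; apply/mnmP => j; rewrite mnm0E.
move: (congr1 (fun m : 'X_{1..n} => m j) e1) (congr1 (fun m : 'X_{1..n} => m j) e2).
rewrite !mnmDE /mono_pos /mono_neg !mnmE /=.
by case: (B j k) => [[|b]|b] /=; lia.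
Qed.

Lemma term_dvd_exch_poly s k c u a : exch_pos s k != exch_neg s k ->
  term c u * a = exch_poly s k -> is_ZP_unit_const (term c u).
Proof.
move=> ne da.
have [hc [v1 hv1]] : (c = 1 \/ c = -1) /\ exists v, tmul u v = exch_pos s k.
  by apply: (@tcoef_term_mul_eq1 _ c u a); rewrite da exch_polyE (tcoef_binomial_l ne).
have [_ [v2 hv2]] : (c = 1 \/ c = -1) /\ exists v, tmul u v = exch_neg s k.
  by apply: (@tcoef_term_mul_eq1 _ c u a); rewrite da exch_polyE (tcoef_binomial_r ne).
have u0 : u.2 = 0%MM by apply: mono_pos_neg_disjoint (congr1 snd hv1) (congr1 snd hv2).
case: u u0 {da hv1 hv2} => p m /= ->; rewrite /term /= mpoly.mpolyX0 mulr1.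
case: hc => ->; first by exists false, p; rewrite expr0 mul1r.
by exists true, p; rewrite expr1 mulN1r /gterm monalg.monalgUN.
Qed.

(* If y_i and y_j can be evaluated to 2 and 1, the 2-adic weight has spread 1
   on P_i and 0 on P_j. *)
Lemma exch_poly_coprime s : (forall i j, i != j ->
    exists2 r, positive_pt r & peval r (yv s i) = 2%:R /\ peval r (yv s j) = 1) ->
  coprime_seed s.
Proof.
move=> hpt i j ij d [a da] [b db].
have [r hr [ri rj]] := hpt i j ij.
have hW := is_weight_logq 2 hr.
have Wi := logq_weight_exch 2 s i hr; rewrite ri logq22 in Wi.
have Wj := logq_weight_exch 2 s j hr; rewrite rj logq1 in Wj.
have ne : exch_pos s i != exch_neg s i.
  by apply/eqP => e; move: Wi; rewrite e subrr => /eqP; rewrite eq_sym oner_eq0.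
have da' := da; rewrite exch_polyE in da'; rewrite exch_polyE in db.
have [|u du] := dvd_binomials_single_term hW Wi _ (esym da') (esym db).
  by apply/eqP; rewrite -subr_eq0 Wj.
by rewrite du in da *; exact: term_dvd_exch_poly ne (esym da).
Qed.

End ExchangePolynomials.

Theorem lemma5p4 (n : nat) (S : seq 'I_n -> yseed n) :
  is_pattern S -> free_coeffs_at_t0 S ->
  forall t : seq 'I_n, reduced_word t -> coprime_seed (S t).
Proof.
move=> hpat hfree t ht; apply: exch_poly_coprime => i j ij.
pose s k : rat := if k == i then 2%:R else 1.
have [k|r hr hrs] := pattern_peval_surj hpat hfree ht (s := s).
  by rewrite /s; case: ifP.
by exists r => //; rewrite !hrs /s eqxx eq_sym (negPf ij).
Qed.
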